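(* Consider the setting described in the context. For every $j\in\{1,\dots,n\}$ and every $t\in[0,T]$, the modal error $e_j(t)=d^h_j(t)u^h_j-d_j(t)u_j$ satisfies \[ \begin{aligned} \|e_j(t)\|_{L^2(\Omega)}\le\ & \|u_0\|_{L^2}\Big(2\|u^h_j-u_j\|_{L^2}+|\cos(\omega^h_jt)-\cos(\omega_jt)|\Big)\\ &+\frac{\|v_0\|_{L^2}}{\omega_j}\Big(\frac{\omega^h_j-\omega_j}{\omega_j}+2\|u^h_j-u_j\|_{L^2}+|\sin(\omega^h_jt)-\sin(\omega_jt)|\Big)\\ &+\frac{1}{\omega_j}\int_0^t\|f(\tau)\|_{L^2}\,d\tau\Big(\frac{\omega^h_j-\omega_j}{\omega_j}+2\|u^h_j-u_j\|_{L^2}+\max_{\tau\in[0,t]}|\sin(\omega^h_j\tau)-\sin(\omega_j\tau)|\Big). \end{aligned} \]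
   Context: Let $\Omega\subset\mathbb{R}^d$ be open, connected, with Lipschitz boundary, $T>0$, and $V\subseteq H^1(\Omega)$ a closed subspace (e.g. functions vanishing on a Dirichlet boundary part) such that the eigenvalue problem $(\nabla u,\nabla v)_{L^2(\Omega)^d}=\lambda(u,v)_{L^2(\Omega)}$ for all $v\in V$ has eigenpairs $(\lambda_i,u_i)_{i\ge1}$ with $0<\lambda_1\le\lambda_2\le\cdots$ and $\{u_i\}$ an $L^2(\Omega)$-orthonormal basis. Let $V^h\subset V$ be a finite-dimensional subspace of dimension $n$ (conforming Galerkin space with consistent mass, i.e. the exact $L^2$ inner product), with discrete eigenpairs $(\lambda^h_i,u^h_i)_{i=1}^n$ of the same problem restricted to $V^h$, ordered $0<\lambda^h_1\le\dots\le\lambda^h_n$ and $L^2$-orthonormal. Set $\omega_i=\sqrt{\lambda_i}$, $\omega^h_i=\sqrt{\lambda^h_i}$. Data: $u_0,v_0\in L^2(\Omega)$, $f\in C^0([0,T];L^2(\Omega))$. Define $u_{i,0}=(u_0,u_i)_{L^2}$, $v_{i,0}=(v_0,u_i)_{L^2}$, $f_i(t)=(f(t),u_i)_{L^2}$ and analogously $u^h_{i,0},v^h_{i,0},f^h_i$ with $u^h_i$ in place of $u_i$, and the modal coefficients \[ d_i(t)=u_{i,0}\cos(\omega_it)+\frac{v_{i,0}}{\omega_i}\sin(\omega_it)+\frac1{\omega_i}\int_0^t\sin(\omega_i(t-\tau))f_i(\tau)\,d\tau, \] \[ d^h_i(t)=u^h_{i,0}\cos(\omega^h_it)+\frac{v^h_{i,0}}{\omega^h_i}\sin(\omega^h_it)+\frac1{\omega^h_i}\int_0^t\sin(\omega^h_i(t-\tau))f^h_i(\tau)\,d\tau,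 \] so that the exact and Galerkin solutions of the wave equation $\partial_{tt}u-\Delta u=f$ are $u=\sum_{i\ge1}d_iu_i$ and $u^h=\sum_{i=1}^nd^h_iu^h_i$. *)

From Stdlib Require Import Reals Lra.
From Coquelicot Require Import Coquelicot.
Set Implicit Arguments.
Open Scope R_scope.

(* ---------- Abstract real inner-product space (models L^2(Omega)) ---------- *)
Definition inner_product {H : ModuleSpace R_Ring} (ip : H -> H -> R) : Prop :=
  (forall x y, ip x y = ip y x) /\
  (forall (c : R) x y z, ip (plus (scal c x) y) z = c * ip x z + ip y z) /\
  (forall x, x <> zero -> 0 < ip x x).

Definition l2norm {H : ModuleSpace R_Ring} (ip : H -> H -> R) (x : H) : R :=
  sqrt (ip x x).

Definition subspace {H : ModuleSpace R_Ring} (V : H -> Prop) : Prop :=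
  V zero /\ (forall (c : R) x y, V x -> V y -> V (plus (scal c x) y)).

Definition subspace_of_dim {H : ModuleSpace R_Ring} (Vh : H -> Prop) (n : nat) : Prop :=
  subspace Vh /\ (1 <= n)%nat /\
  exists b : nat -> H,
    (forall k, (k < n)%nat -> Vh (b k)) /\
    (forall v, Vh v -> exists c : nat -> R,
        v = sum_n_m (fun k => scal (c k) (b k)) 0 (pred n)) /\
    (forall c : nat -> R,
        sum_n_m (fun k => scal (c k) (b k)) 0 (pred n) = zero ->
        forall k, (k < n)%nat -> c k = 0).

(* the bilinear form a(u,v) = (grad u, grad v) on V: symmetric, bilinear, nonnegative *)
Definition energy_form {H : ModuleSpace R_Ring} (V : H -> Prop) (a : H -> H -> R) : Prop :=
  (forall x y, V x -> V y -> a x y = a y x) /\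
  (forall (c : R) x y z, V x -> V y -> V z ->
      a (plus (scal c x) y) z = c * a x z + a y z) /\
  (forall x, V x -> 0 <= a x x).

Definition exact_eigenpairs {H : ModuleSpace R_Ring} (ip : H -> H -> R)
  (V : H -> Prop) (a : H -> H -> R) (lam : nat -> R) (u : nat -> H) : Prop :=
  (forall i, (1 <= i)%nat -> V (u i) /\
      forall v, V v -> a (u i) v = lam i * ip (u i) v) /\
  0 < lam 1%nat /\
  (forall i, (1 <= i)%nat -> lam i <= lam (S i)) /\
  (forall i k, (1 <= i)%nat -> (1 <= k)%nat ->
      ip (u i) (u k) = if Nat.eqb i k then 1 else 0) /\
  (forall x, is_lim_seq
      (fun N => l2norm ip (minus x (sum_n_m (fun i => scal (ip x (u i)) (u i)) 1 N))) 0).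

Definition discrete_eigenpairs {H : ModuleSpace R_Ring} (ip : H -> H -> R)
  (Vh : H -> Prop) (n : nat) (a : H -> H -> R) (lamh : nat -> R) (uh : nat -> H) : Prop :=
  (forall i, (1 <= i <= n)%nat -> Vh (uh i) /\
      forall v, Vh v -> a (uh i) v = lamh i * ip (uh i) v) /\
  0 < lamh 1%nat /\
  (forall i, (1 <= i)%nat -> (i < n)%nat -> lamh i <= lamh (S i)) /\
  (forall i k, (1 <= i <= n)%nat -> (1 <= k <= n)%nat ->
      ip (uh i) (uh k) = if Nat.eqb i k then 1 else 0).

Definition continuous_on_0T {H : ModuleSpace R_Ring} (ip : H -> H -> R)
  (T : R) (f : R -> H) : Prop :=
  forall t0, 0 <= t0 <= T -> forall eps, 0 < eps ->
    exists delta, 0 < delta /\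
      forall t, 0 <= t <= T -> Rabs (t - t0) < delta ->
        l2norm ip (minus (f t) (f t0)) < eps.

Definition dcoef {H : ModuleSpace R_Ring} (ip : H -> H -> R) (lam : R) (w : H)
  (u0 v0 : H) (f : R -> H) (t : R) : R :=
  let om := sqrt lam in
  ip u0 w * cos (om * t) + ip v0 w / om * sin (om * t)
  + / om * RInt (fun tau => sin (om * (t - tau)) * ip (f tau) w) 0 t.

(* max_{tau in [0,t]} g(tau), as the supremum (attained for continuous g) *)
Definition max_on_0t (g : R -> R) (t : R) : R :=
  real (Lub_Rbar (fun y => exists tau, 0 <= tau <= t /\ y = g tau)).

From Stdlib Require Import Reals.
From Coquelicot Require Import Coquelicot.
From Stdlib Require Import Lra Lia Classical.
Open Scope R_scope.

(* The modal error splits as e = (d^h - d) u^h + d (u^h - u), whence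
   |e| <= |d^h - d| + |d| |u^h - u|.  Each of the three parts of a modal coefficient
   (initial displacement, initial velocity, Duhamel integral of the forcing) moves by at
   most the size of its datum times |u^h - u| plus the change of its trigonometric factor;
   dividing by omega^h instead of omega costs (omega^h - omega) / omega^2 because
   omega <= omega^h.  That last inequality is the min-max principle lambda_j <= lambda^h_j:
   by a dimension count some nonzero combination of u^h_1, ..., u^h_j is orthogonal to
   u_1, ..., u_(j-1); expanding it in the exact eigenbasis bounds its Rayleigh quotient
   below by lambda_j, and expanding it in the discrete one bounds it above by lambda^h_j. *)

(* [scal_one] with the real literal [1], which is not syntactically the ring's [one]. *)
Lemma scal_R1 {V : ModuleSpace R_Ring} (x : V) : scal 1 x = x.
Proof. exact (scal_one x). Qed.

Lemma sum_n_m_additive {G : AbelianMonoid} (P : G -> Prop) (L : G -> R) (g : nat -> G) p q :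
  P zero -> (forall x y, P x -> P y -> P (plus x y)) ->
  L zero = 0 -> (forall x y, P x -> P y -> L (plus x y) = L x + L y) ->
  (forall k, (p <= k <= q)%nat -> P (g k)) ->
  P (sum_n_m g p q) /\ L (sum_n_m g p q) = sum_n_m (fun k => L (g k)) p q.
Proof.
  intros P0 Pplus L0 Lplus. induction q as [|q IH]; intros Pg.
  - destruct p as [|p].
    + rewrite !sum_n_n. split; [apply Pg; lia | reflexivity].
    + rewrite !sum_n_m_zero by lia. auto.
  - destruct (Nat.le_gt_cases p q) as [Hpq|Hpq].
    + destruct IH as [IH1 IH2]; [intros k Hk; apply Pg; lia|].
      rewrite !sum_n_Sm by lia.
      split; [apply Pplus; [exact IH1 | apply Pg; lia]|].
      rewrite Lplus, IH2; [reflexivity | exact IH1 | apply Pg; lia].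
    + destruct (Nat.eq_dec p (S q)) as [->|Hp].
      * rewrite !sum_n_n. split; [apply Pg; lia | reflexivity].
      * rewrite !sum_n_m_zero by lia. auto.
Qed.

Section EnergyForm.

Context {H : ModuleSpace R_Ring} {V : H -> Prop} {a : H -> H -> R}.
Hypotheses (HV : subspace V) (Ha : energy_form V a).

Lemma subspace_plus x y : V x -> V y -> V (plus x y).
Proof. intros Vx Vy. rewrite <- (scal_one x). apply HV; assumption. Qed.

Lemma subspace_scal c x : V x -> V (scal c x).
Proof. intros Vx. rewrite <- (plus_zero_r (scal c x)). apply HV; [exact Vx | apply HV]. Qed.

Lemma subspace_minus x y : V x -> V y -> V (minus x y).
Proof.
  intros Vx Vy. apply subspace_plus; [exact Vx|].
  rewrite <- scal_opp_one. apply subspace_scal, Vy.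
Qed.

Lemma subspace_sum (g : nat -> H) p q :
  (forall k, (p <= k <= q)%nat -> V (g k)) -> V (sum_n_m g p q).
Proof.
  intros Vg. apply (sum_n_m_additive V (fun _ => 0)); auto.
  - apply HV.
  - exact subspace_plus.
  - intros; ring.
Qed.

Lemma form_sym x y : V x -> V y -> a x y = a y x.
Proof. apply Ha. Qed.

Lemma form_zero_l z : V z -> a zero z = 0.
Proof.
  intros Vz. destruct Ha as [_ [Hlin _]].
  pose proof (Hlin 1 zero zero z (proj1 HV) (proj1 HV) Vz) as E.
  rewrite scal_R1, plus_zero_r in E. lra.
Qed.

Lemma form_scal_l c x z : V x -> V z -> a (scal c x) z = c * a x z.
Proof.
  intros Vx Vz. destruct Ha as [_ [Hlin _]].
  rewrite <- (plus_zero_r (scal c x)), (Hlin c x zero z Vx (proj1 HV) Vz), form_zero_l by exact Vz.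
  ring.
Qed.

Lemma form_plus_l x y z : V x -> V y -> V z -> a (plus x y) z = a x z + a y z.
Proof.
  intros Vx Vy Vz. destruct Ha as [_ [Hlin _]].
  rewrite <- (scal_R1 x) at 1. rewrite Hlin by assumption. ring.
Qed.

Lemma form_minus_l x y z : V x -> V y -> V z -> a (minus x y) z = a x z - a y z.
Proof.
  intros Vx Vy Vz. unfold minus. rewrite <- scal_opp_one.
  rewrite form_plus_l, form_scal_l by (auto using subspace_scal).
  change (opp one) with (Ropp 1). ring.
Qed.

Lemma form_minus_r x y z : V x -> V y -> V z -> a z (minus x y) = a z x - a z y.
Proof.
  intros Vx Vy Vz.
  rewrite form_sym, form_minus_l, (form_sym x), (form_sym y) by (auto using subspace_minus).
  reflexivity.
Qed.

Lemma form_sum_l (g : nat -> H) z p q : V z ->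
  (forall k, (p <= k <= q)%nat -> V (g k)) ->
  a (sum_n_m g p q) z = sum_n_m (fun k => a (g k) z) p q.
Proof.
  intros Vz Vg. apply (sum_n_m_additive V (fun x => a x z)); auto.
  - apply HV.
  - exact subspace_plus.
  - exact (form_zero_l z Vz).
  - intros; apply form_plus_l; auto.
Qed.

End EnergyForm.

Section InnerProduct.

Context {H : ModuleSpace R_Ring} {ip : H -> H -> R}.
Hypothesis Hip : inner_product ip.

Let full_subspace : subspace (fun _ : H => True).
Proof. split; auto. Qed.

Let ip_energy_form : energy_form (fun _ : H => True) ip.
Proof.
  destruct Hip as [Hsym [Hlin Hpos]]. split; [auto|]. split; [auto|].
  intros x _. destruct (classic (x = zero)) as [->|Hx]; [|left; auto].
  pose proof (Hlin 1 zero zero zero) as E. rewrite scal_R1, plus_zero_r in E. lra.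
Qed.

Lemma ip_sym x y : ip x y = ip y x.
Proof. apply Hip. Qed.

Lemma ip_self_nonneg x : 0 <= ip x x.
Proof. apply ip_energy_form; exact I. Qed.

Lemma ip_self_eq0 x : ip x x = 0 -> x = zero.
Proof.
  intros E. apply NNPP. intros Hx. pose proof (proj2 (proj2 Hip) x Hx). lra.
Qed.

Lemma ip_zero_l z : ip zero z = 0.
Proof. exact (form_zero_l full_subspace ip_energy_form z I). Qed.

Lemma ip_scal_l c x z : ip (scal c x) z = c * ip x z.
Proof. exact (form_scal_l full_subspace ip_energy_form c x z I I). Qed.

Lemma ip_scal_r c x z : ip z (scal c x) = c * ip z x.
Proof. rewrite ip_sym, ip_scal_l, ip_sym. reflexivity. Qed.

Lemma ip_plus_l x y z : ip (plus x y) z = ip x z + ip y z.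
Proof. exact (form_plus_l ip_energy_form x y z I I I). Qed.

Lemma ip_plus_r x y z : ip z (plus x y) = ip z x + ip z y.
Proof. rewrite ip_sym, ip_plus_l, !(ip_sym _ z). reflexivity. Qed.

Lemma ip_minus_l x y z : ip (minus x y) z = ip x z - ip y z.
Proof. exact (form_minus_l full_subspace ip_energy_form x y z I I I). Qed.

Lemma ip_minus_r x y z : ip z (minus x y) = ip z x - ip z y.
Proof. exact (form_minus_r full_subspace ip_energy_form x y z I I I). Qed.

Lemma ip_sum_l (g : nat -> H) z p q :
  ip (sum_n_m g p q) z = sum_n_m (fun k => ip (g k) z) p q.
Proof. exact (form_sum_l full_subspace ip_energy_form g z p q I (fun _ _ => I)). Qed.

Lemma cauchy_schwarz_sqr x y : ip x y ^ 2 <= ip x x * ip y y.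
Proof.
  destruct (Req_dec (ip y y) 0) as [Hy|Hy].
  - apply ip_self_eq0 in Hy. subst y. rewrite ip_sym, !ip_zero_l. lra.
  - pose proof (ip_self_nonneg y).
    pose proof (ip_self_nonneg (minus x (scal (ip x y / ip y y) y))) as Hnn.
    rewrite ip_minus_l, !ip_minus_r, !ip_scal_l, !ip_scal_r, (ip_sym y x) in Hnn.
    assert (Hexpand : ip x x - ip x y ^ 2 / ip y y =
      ip x x - ip x y / ip y y * ip x y
      - (ip x y / ip y y * ip x y - ip x y / ip y y * (ip x y / ip y y * ip y y)))
      by (field; exact Hy).
    assert (0 <= ip x x - ip x y ^ 2 / ip y y) by lra.
    apply Rmult_le_reg_r with (/ ip y y); [apply Rinv_0_lt_compat; lra|].
    replace (ip x x * ip y y * / ip y y) with (ip x x) by (field; exact Hy).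
    unfold Rdiv in *. lra.
Qed.

Lemma l2norm_nonneg x : 0 <= l2norm ip x.
Proof. apply sqrt_pos. Qed.

Lemma l2norm_sqr x : l2norm ip x * l2norm ip x = ip x x.
Proof. apply sqrt_sqrt, ip_self_nonneg. Qed.

Lemma cauchy_schwarz x y : Rabs (ip x y) <= l2norm ip x * l2norm ip y.
Proof.
  pose proof (l2norm_nonneg x). pose proof (l2norm_nonneg y).
  pose proof (cauchy_schwarz_sqr x y) as Hcs. rewrite <- !l2norm_sqr in Hcs.
  rewrite <- (Rabs_pos_eq (l2norm ip x * l2norm ip y)) by nra.
  apply Rsqr_le_abs_0. unfold Rsqr. nra.
Qed.

Lemma l2norm_scal c x : l2norm ip (scal c x) = Rabs c * l2norm ip x.
Proof.
  unfold l2norm. rewrite ip_scal_l, ip_scal_r, <- Rmult_assoc.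
  rewrite sqrt_mult by (nra || apply ip_self_nonneg).
  change (c * c) with (Rsqr c). rewrite sqrt_Rsqr_abs. reflexivity.
Qed.

Lemma l2norm_triangle x y : l2norm ip (plus x y) <= l2norm ip x + l2norm ip y.
Proof.
  pose proof (l2norm_nonneg x). pose proof (l2norm_nonneg y).
  rewrite <- (sqrt_square (l2norm ip x + l2norm ip y)) by lra.
  apply sqrt_le_1_alt.
  rewrite ip_plus_l, !ip_plus_r, (ip_sym y x).
  pose proof (cauchy_schwarz x y). pose proof (Rle_abs (ip x y)).
  pose proof (l2norm_sqr x). pose proof (l2norm_sqr y). nra.
Qed.

Lemma l2norm_reverse_triangle x y :
  Rabs (l2norm ip x - l2norm ip y) <= l2norm ip (minus x y).
Proof.
  assert (Hle : forall p q, l2norm ip p <= l2norm ip (minus p q) + l2norm ip q).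
  { intros p q. replace p with (plus (minus p q) q) at 1; [apply l2norm_triangle|].
    unfold minus. rewrite <- plus_assoc, plus_opp_l, plus_zero_r. reflexivity. }
  assert (Hsym : l2norm ip (minus y x) = l2norm ip (minus x y)).
  { rewrite <- opp_minus, <- scal_opp_one, l2norm_scal. change (opp one) with (Ropp 1).
    rewrite Rabs_Ropp, Rabs_R1. ring. }
  pose proof (Hle x y). pose proof (Hle y x). apply Rabs_le. lra.
Qed.

Lemma ip_mul_bound g w p : l2norm ip w = 1 -> Rabs p <= 1 -> Rabs (p * ip g w) <= l2norm ip g.
Proof.
  intros Hw Hp. rewrite Rabs_mult. pose proof (cauchy_schwarz g w). rewrite Hw in *.
  pose proof (Rabs_pos p). pose proof (Rabs_pos (ip g w)). nra.
Qed.

Lemma ip_mul_diff_bound g w wh p ph : l2norm ip w = 1 -> Rabs ph <= 1 ->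
  Rabs (ph * ip g wh - p * ip g w)
  <= l2norm ip g * (l2norm ip (minus wh w) + Rabs (ph - p)).
Proof.
  intros Hw Hph.
  replace (ph * ip g wh - p * ip g w) with (ph * ip g (minus wh w) + (ph - p) * ip g w)
    by (rewrite ip_minus_r; ring).
  eapply Rle_trans; [apply Rabs_triang|]. rewrite !Rabs_mult.
  pose proof (cauchy_schwarz g (minus wh w)). pose proof (cauchy_schwarz g w). rewrite Hw in *.
  pose proof (Rabs_pos (ip g (minus wh w))). pose proof (Rabs_pos (ph - p)).
  pose proof (l2norm_nonneg g). nra.
Qed.

Lemma l2norm_scal_diff_le w wh p ph : l2norm ip wh = 1 ->
  l2norm ip (minus (scal ph wh) (scal p w)) <= Rabs (ph - p) + Rabs p * l2norm ip (minus wh w).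
Proof.
  intros Hwh.
  rewrite (minus_trans (scal p wh)), <- (scal_minus_distr_r ph p), <- scal_minus_distr_l.
  eapply Rle_trans; [apply l2norm_triangle|]. rewrite !l2norm_scal, Hwh.
  right. change (minus ph p) with (ph - p). ring.
Qed.

End InnerProduct.

Lemma sum_n_m_Rmult_l (c : R) (f : nat -> R) p q :
  sum_n_m (fun k => c * f k) p q = c * sum_n_m f p q.
Proof. apply (sum_n_m_mult_l c f). Qed.

Lemma sum_n_m_Rminus (f g : nat -> R) p q :
  sum_n_m (fun k => f k - g k) p q = sum_n_m f p q - sum_n_m g p q.
Proof.
  rewrite (sum_n_m_ext _ (fun k => plus (f k) ((-1) * g k))) by (intros; cbn; ring).
  rewrite sum_n_m_plus, (sum_n_m_Rmult_l (-1)). cbn. ring.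
Qed.

Lemma sum_n_m_zero_terms (f : nat -> R) p q :
  (forall k, (p <= k <= q)%nat -> f k = 0) -> sum_n_m f p q = 0.
Proof.
  intros Hf. rewrite (sum_n_m_ext_loc f (fun _ => zero)) by exact Hf.
  apply (@sum_n_m_const_zero R_AbelianMonoid).
Qed.

Lemma sum_n_m_single_term (f : nat -> R) p q k : (p <= k <= q)%nat ->
  (forall l, (p <= l <= q)%nat -> l <> k -> f l = 0) -> sum_n_m f p q = f k.
Proof.
  intros Hk Hf.
  rewrite (sum_n_m_Chasles f p k q) by lia.
  destruct (Nat.eq_dec p k) as [<-|Hpk]; [rewrite sum_n_n|].
  - rewrite (sum_n_m_zero_terms f (S p) q) by (intros l Hl; apply Hf; lia). cbn. ring.
  - rewrite (sum_n_m_Chasles f p (pred k) k) by lia.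
    replace (S (pred k)) with k by lia. rewrite sum_n_n.
    rewrite (sum_n_m_zero_terms f p (pred k)) by (intros l Hl; apply Hf; lia).
    rewrite (sum_n_m_zero_terms f (S k) q) by (intros l Hl; apply Hf; lia).
    cbn. ring.
Qed.

Lemma sum_n_m_le_loc (f g : nat -> R) p q :
  (forall k, (p <= k <= q)%nat -> f k <= g k) -> sum_n_m f p q <= sum_n_m g p q.
Proof.
  intros Hfg.
  set (clip := fun h : nat -> R => fun k => if andb (Nat.leb p k) (Nat.leb k q) then h k else 0).
  assert (Hclip : forall h, sum_n_m (clip h) p q = sum_n_m h p q).
  { intros h. apply sum_n_m_ext_loc. intros k Hk. unfold clip.
    rewrite (proj2 (Nat.leb_le p k)), (proj2 (Nat.leb_le k q)) by lia. reflexivity. }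
  rewrite <- (Hclip f), <- (Hclip g). apply sum_n_m_le. intros k. unfold clip.
  destruct (Nat.leb p k) eqn:E1, (Nat.leb k q) eqn:E2; cbn; try lra.
  apply Hfg. apply Nat.leb_le in E1, E2. lia.
Qed.

Lemma le_of_le_succ_on (l : nat -> R) lo hi :
  (forall i, (lo <= i < hi)%nat -> l i <= l (S i)) ->
  forall i k, (lo <= i <= k)%nat -> (k <= hi)%nat -> l i <= l k.
Proof.
  intros Hstep i k Hik Hk. induction k as [|k IH].
  - replace i with 0%nat by lia. lra.
  - destruct (Nat.eq_dec i (S k)) as [->|Hne]; [lra|].
    apply Rle_trans with (l k); [apply IH | apply Hstep]; lia.
Qed.

(* Eliminate the last unknown with an equation in which it occurs, if there is one. *)
Lemma homogeneous_system_nontrivial_solution m (A : nat -> nat -> R) :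
  exists b : nat -> R, (exists k, (k <= m)%nat /\ b k <> 0) /\
    forall i, (i < m)%nat -> sum_n_m (fun k => A i k * b k) 0 m = 0.
Proof.
  revert A; induction m as [|m IH]; intros A.
  { exists (fun _ => 1). split; [exists 0%nat; split; [lia | lra] | intros; lia]. }
  destruct (classic (exists i0, (i0 <= m)%nat /\ A i0 (S m) <> 0))
    as [[i0 [Hi0 Hpiv]]|Hzero].
  - set (row := fun i => if Nat.eqb i i0 then m else i).
    destruct (IH (fun i k => A (row i) k - A (row i) (S m) / A i0 (S m) * A i0 k))
      as [b [Hb Hsol]].
    set (s := sum_n_m (fun k => A i0 k * b k) 0 m).
    exists (fun k => if Nat.leb k m then b k else - s / A i0 (S m)). split.
    { destruct Hb as [k [Hk Hbk]]. exists k. rewrite (proj2 (Nat.leb_le k m) Hk). auto. }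
    intros i Hi. rewrite sum_n_Sm, (proj2 (Nat.leb_gt (S m) m)) by lia.
    rewrite (sum_n_m_ext_loc _ (fun k => A i k * b k))
      by (intros k Hk; rewrite (proj2 (Nat.leb_le k m)) by lia; reflexivity).
    assert (Hrow : sum_n_m (fun k => A i k * b k) 0 m = A i (S m) / A i0 (S m) * s).
    { destruct (Nat.eq_dec i i0) as [->|Hne].
      { unfold Rdiv. rewrite Rinv_r by exact Hpiv. symmetry. apply Rmult_1_l. }
      set (i' := if Nat.eqb i m then i0 else i).
      assert (Hi' : (i' < m)%nat /\ row i' = i).
      { unfold i', row. destruct (Nat.eqb_spec i m) as [->|Him].
        - rewrite Nat.eqb_refl. split; [lia | reflexivity].
        - destruct (Nat.eqb_spec i i0); [contradiction | split; [lia | reflexivity]]. }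
      destruct Hi' as [Hi'm Hrowi]. specialize (Hsol i' Hi'm). cbn beta in Hsol.
      rewrite Hrowi in Hsol.
      rewrite (sum_n_m_ext _ (fun k => A i k * b k - A i (S m) / A i0 (S m) * (A i0 k * b k)))
        in Hsol by (intros; cbn; ring).
      rewrite sum_n_m_Rminus, sum_n_m_Rmult_l in Hsol. fold s in Hsol. lra. }
    change (sum_n_m (fun k => A i k * b k) 0 m + A i (S m) * (- s / A i0 (S m)) = 0).
    rewrite Hrow. field. exact Hpiv.
  - exists (fun k => if Nat.eqb k (S m) then 1 else 0). split.
    { exists (S m). rewrite Nat.eqb_refl. split; [lia | lra]. }
    intros i Hi. rewrite sum_n_Sm, Nat.eqb_refl by lia.
    rewrite sum_n_m_zero_terms.
    + assert (A i (S m) = 0) as ->.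
      { apply NNPP. intros Hne. apply Hzero. exists i. split; [lia | exact Hne]. }
      cbn. ring.
    + intros k Hk. rewrite (proj2 (Nat.eqb_neq k (S m))) by lia. ring.
Qed.

Definition fourier_partial_sum {H : ModuleSpace R_Ring} (ip : H -> H -> R) (u : nat -> H)
  (v : H) (N : nat) : H :=
  sum_n_m (fun i => scal (ip v (u i)) (u i)) 1 N.

Section RayleighLowerBound.

Context {H : ModuleSpace R_Ring} {ip : H -> H -> R} {V : H -> Prop} {a : H -> H -> R}
  {lam : nat -> R} {u : nat -> H}.
Hypotheses (Hip : inner_product ip) (HV : subspace V) (Ha : energy_form V a)
  (Hex : exact_eigenpairs ip V a lam u).

Let eigvec_in_V i : (1 <= i)%nat -> V (u i).
Proof. intros Hi. apply (proj1 Hex i Hi). Qed.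

Let partial_sum_in_V v N : V (fourier_partial_sum ip u v N).
Proof.
  apply (subspace_sum HV). intros k Hk. apply (subspace_scal HV), eigvec_in_V. lia.
Qed.

Lemma ip_fourier_partial_sum_l v z N :
  ip (fourier_partial_sum ip u v N) z = sum_n_m (fun k => ip v (u k) * ip (u k) z) 1 N.
Proof.
  unfold fourier_partial_sum. rewrite (ip_sum_l Hip).
  apply sum_n_m_ext. intros k. apply (ip_scal_l Hip).
Qed.

Lemma form_fourier_partial_sum_l v z N : V z ->
  a (fourier_partial_sum ip u v N) z
  = sum_n_m (fun k => ip v (u k) * lam k * ip (u k) z) 1 N.
Proof.
  intros Vz. unfold fourier_partial_sum.
  rewrite (form_sum_l HV Ha) by (auto; intros k Hk; apply (subspace_scal HV), eigvec_in_V; lia).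
  apply sum_n_m_ext_loc. intros k Hk.
  rewrite (form_scal_l HV Ha) by (auto; apply eigvec_in_V; lia).
  rewrite (proj2 (proj1 Hex k ltac:(lia)) z Vz). cbn. ring.
Qed.

Lemma fourier_remainder_orthogonal v N i : (1 <= i <= N)%nat ->
  ip (u i) (minus v (fourier_partial_sum ip u v N)) = 0.
Proof.
  intros Hi. rewrite (ip_minus_r Hip), (ip_sym Hip (u i) (fourier_partial_sum _ _ _ _)).
  rewrite ip_fourier_partial_sum_l.
  rewrite (sum_n_m_single_term _ 1 N i Hi).
  - destruct Hex as [_ [_ [_ [Horth _]]]].
    rewrite Horth, Nat.eqb_refl by lia. rewrite (ip_sym Hip). ring.
  - intros l Hl Hli. destruct Hex as [_ [_ [_ [Horth _]]]].
    rewrite Horth by lia. rewrite (proj2 (Nat.eqb_neq l i) Hli). ring.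
Qed.

Lemma fourier_remainder_sqr v N :
  ip (minus v (fourier_partial_sum ip u v N)) (minus v (fourier_partial_sum ip u v N))
  = ip v v - sum_n_m (fun k => ip v (u k) ^ 2) 1 N.
Proof.
  set (w := minus v (fourier_partial_sum ip u v N)).
  assert (Hperp : ip (fourier_partial_sum ip u v N) w = 0).
  { rewrite ip_fourier_partial_sum_l. apply sum_n_m_zero_terms. intros k Hk.
    unfold w. rewrite fourier_remainder_orthogonal by lia. ring. }
  unfold w at 1. rewrite (ip_minus_l Hip), Hperp, Rminus_0_r.
  unfold w. rewrite (ip_minus_r Hip), (ip_sym Hip v (fourier_partial_sum _ _ _ _)).
  rewrite ip_fourier_partial_sum_l.
  f_equal. apply sum_n_m_ext. intros k. rewrite (ip_sym Hip (u k)). cbn. ring.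
Qed.

Lemma fourier_remainder_energy v N : V v ->
  a (minus v (fourier_partial_sum ip u v N)) (minus v (fourier_partial_sum ip u v N))
  = a v v - sum_n_m (fun k => lam k * ip v (u k) ^ 2) 1 N.
Proof.
  intros Vv. set (w := minus v (fourier_partial_sum ip u v N)).
  assert (Vw : V w) by (apply (subspace_minus HV); auto).
  assert (Hperp : a (fourier_partial_sum ip u v N) w = 0).
  { rewrite form_fourier_partial_sum_l by exact Vw. apply sum_n_m_zero_terms. intros k Hk.
    unfold w. rewrite fourier_remainder_orthogonal by lia. ring. }
  unfold w at 1. rewrite (form_minus_l HV Ha), Hperp, Rminus_0_r by auto.
  unfold w. rewrite (form_minus_r HV Ha), (form_sym Ha v (fourier_partial_sum _ _ _ _)) by auto.
  rewrite form_fourier_partial_sum_l by auto.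
  f_equal. apply sum_n_m_ext. intros k. rewrite (ip_sym Hip (u k)). cbn. ring.
Qed.

Lemma rayleigh_lower_bound j v : (1 <= j)%nat -> V v ->
  (forall i, (1 <= i < j)%nat -> ip v (u i) = 0) -> lam j * ip v v <= a v v.
Proof.
  intros Hj Vv Horth.
  destruct Hex as [_ [_ [Hmono [_ Hbasis]]]].
  set (w := fun N => minus v (fourier_partial_sum ip u v N)).
  assert (Hbound : forall N, lam j * (ip v v - l2norm ip (w N) * l2norm ip (w N)) <= a v v).
  { intros N. unfold w. rewrite (l2norm_sqr Hip), fourier_remainder_sqr.
    apply Rle_trans with (sum_n_m (fun k => lam k * ip v (u k) ^ 2) 1 N).
    - apply Rle_trans with (sum_n_m (fun k => lam j * ip v (u k) ^ 2) 1 N).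
      { rewrite sum_n_m_Rmult_l. right. ring. }
      apply sum_n_m_le_loc. intros k Hk. destruct (Nat.lt_ge_cases k j) as [Hkj|Hjk].
      + rewrite Horth by lia. cbn. lra.
      + apply Rmult_le_compat_r; [apply pow2_ge_0|].
        apply (le_of_le_succ_on lam 1 k); [intros i Hi; apply Hmono | |]; lia.
    - pose proof (fourier_remainder_energy v N Vv).
      pose proof (proj2 (proj2 Ha) _ (subspace_minus HV _ _ Vv (partial_sum_in_V v N))).
      lra. }
  assert (Hlim : is_lim_seq (fun N => lam j * (ip v v - l2norm ip (w N) * l2norm ip (w N)))
                   (lam j * (ip v v - 0 * 0))).
  { apply is_lim_seq_mult'; [apply is_lim_seq_const|].
    apply is_lim_seq_minus'; [apply is_lim_seq_const|].
    apply is_lim_seq_mult'; apply Hbasis. }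
  pose proof (is_lim_seq_le _ _ _ _ Hbound Hlim (is_lim_seq_const (a v v))) as Hle.
  cbn in Hle. lra.
Qed.

End RayleighLowerBound.

Section RayleighUpperBound.

Context {H : ModuleSpace R_Ring} {ip : H -> H -> R} {V Vh : H -> Prop} {a : H -> H -> R}
  {n : nat} {lamh : nat -> R} {uh : nat -> H}.
Hypotheses (Hip : inner_product ip) (HV : subspace V) (Ha : energy_form V a)
  (HVh : subspace Vh) (HVhV : forall v, Vh v -> V v)
  (Hdisc : discrete_eigenpairs ip Vh n a lamh uh).

Let discrete_combination (b : nat -> R) m : H :=
  sum_n_m (fun k => scal (b k) (uh (S k))) 0 m.

Let discrete_combination_in_Vh b m : (S m <= n)%nat -> Vh (discrete_combination b m).
Proof.
  intros Hm. apply (subspace_sum HVh). intros k Hk.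
  apply (subspace_scal HVh), (proj1 Hdisc (S k)). lia.
Qed.

Lemma ip_discrete_combination b m k : (S m <= n)%nat -> (k <= m)%nat ->
  ip (discrete_combination b m) (uh (S k)) = b k.
Proof.
  intros Hm Hk. destruct Hdisc as [_ [_ [_ Horth]]].
  unfold discrete_combination. rewrite (ip_sum_l Hip).
  rewrite (sum_n_m_single_term _ 0 m k) by
    (try lia; intros l Hl Hlk; rewrite (ip_scal_l Hip), Horth by lia;
     rewrite (proj2 (Nat.eqb_neq (S l) (S k))) by lia; ring).
  rewrite (ip_scal_l Hip), Horth, Nat.eqb_refl by lia. ring.
Qed.

Lemma rayleigh_upper_bound b m : (S m <= n)%nat ->
  let v := discrete_combination b m in a v v <= lamh (S m) * ip v v.
Proof.
  intros Hm v.
  assert (Vv : V v) by (apply HVhV, discrete_combination_in_Vh, Hm).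
  assert (Huh : forall k, (k <= m)%nat -> Vh (uh (S k))) by (intros k Hk; apply Hdisc; lia).
  assert (Hcoef : forall k, (k <= m)%nat -> ip v (uh (S k)) = b k)
    by (intros k Hk; apply ip_discrete_combination; lia).
  assert (Hip_vv : ip v v = sum_n_m (fun k => b k ^ 2) 0 m).
  { unfold v at 1, discrete_combination. rewrite (ip_sum_l Hip).
    apply sum_n_m_ext_loc. intros k Hk.
    rewrite (ip_scal_l Hip), (ip_sym Hip), Hcoef by lia. cbn. ring. }
  unfold v at 1, discrete_combination.
  rewrite (form_sum_l HV Ha) by (auto; intros k Hk; apply (subspace_scal HV), HVhV, Huh; lia).
  rewrite Hip_vv, <- sum_n_m_Rmult_l. apply sum_n_m_le_loc. intros k Hk.
  rewrite (form_scal_l HV Ha) by (auto; apply HVhV, Huh; lia).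
  rewrite (proj2 (proj1 Hdisc (S k) ltac:(lia)) v (discrete_combination_in_Vh b m Hm)).
  rewrite (ip_sym Hip), Hcoef by lia.
  assert (lamh (S k) <= lamh (S m)).
  { destruct Hdisc as [_ [_ [Hmono _]]].
    apply (le_of_le_succ_on lamh 1 n); [intros i Hi; apply Hmono | |]; lia. }
  pose proof (pow2_ge_0 (b k)). cbn in *. nra.
Qed.

Lemma exact_eigenvalue_le_discrete (lam : nat -> R) (u : nat -> H) j :
  exact_eigenpairs ip V a lam u -> (1 <= j <= n)%nat -> lam j <= lamh j.
Proof.
  intros Hex Hj. destruct j as [|m]; [lia|].
  destruct (homogeneous_system_nontrivial_solution m (fun i k => ip (uh (S k)) (u (S i))))
    as [b [[k0 [Hk0 Hbk0]] Hsol]].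
  set (v := discrete_combination b m).
  assert (Vv : V v) by (apply HVhV, discrete_combination_in_Vh; lia).
  assert (Hpos : 0 < ip v v).
  { apply Hip. intros Hv0. apply Hbk0.
    rewrite <- (ip_discrete_combination b m k0), (ip_sym Hip) by lia. fold v.
    rewrite Hv0, (ip_sym Hip). apply (ip_zero_l Hip). }
  assert (Horth : forall i, (1 <= i < S m)%nat -> ip v (u i) = 0).
  { intros [|i] Hi; [lia|]. rewrite <- (Hsol i) by lia.
    unfold v, discrete_combination. rewrite (ip_sum_l Hip).
    apply sum_n_m_ext. intros k. rewrite (ip_scal_l Hip). cbn. ring. }
  pose proof (rayleigh_lower_bound Hip HV Ha Hex (S m) v ltac:(lia) Vv Horth).
  pose proof (rayleigh_upper_bound b m ltac:(lia)) as Hup. cbn zeta in Hup. fold v in Hup.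
  nra.
Qed.

End RayleighUpperBound.

Lemma Rabs_sin_le_1 x : Rabs (sin x) <= 1.
Proof. apply Rabs_le, SIN_bound. Qed.

Lemma Rabs_cos_le_1 x : Rabs (cos x) <= 1.
Proof. apply Rabs_le, COS_bound. Qed.

Lemma div_diff_bound om omh x xh D N : 0 < om <= omh ->
  Rabs (xh - x) <= D -> Rabs x <= N ->
  Rabs (xh / omh - x / om) <= (D + N * ((omh - om) / om)) / om.
Proof.
  intros Hom Hxh Hx.
  set (r := (omh - om) / (om * omh)).
  assert (Hr : 0 <= r <= (omh - om) / om / om).
  { unfold r. split; [apply Rdiv_le_0_compat; nra|].
    unfold Rdiv. rewrite Rmult_assoc, <- Rinv_mult.
    apply Rmult_le_compat_l; [lra|]. apply Rinv_le_contravar; nra. }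
  assert (Hinv : 0 < / omh <= / om)
    by (split; [apply Rinv_0_lt_compat | apply Rinv_le_contravar]; lra).
  replace (xh / omh - x / om) with ((xh - x) * / omh - x * r) by (unfold r; field; lra).
  eapply Rle_trans; [apply Rabs_triang|]. rewrite Rabs_Ropp, !Rabs_mult.
  rewrite (Rabs_pos_eq (/ omh)), (Rabs_pos_eq r) by lra.
  pose proof (Rabs_pos (xh - x)). pose proof (Rabs_pos x).
  apply Rle_trans with (D * / om + N * ((omh - om) / om / om)); [nra|].
  right. field. lra.
Qed.

Lemma continuous_of_eps_delta (g : R -> R) z :
  (forall eps, 0 < eps -> exists delta, 0 < delta /\
     forall x, Rabs (x - z) < delta -> Rabs (g x - g z) < eps) ->
  continuous g z.
Proof.
  intros Hg. apply continuity_pt_filterlim. intros eps Heps.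
  destruct (Hg eps Heps) as [delta [Hdelta Hclose]].
  exists delta. split; [exact Hdelta|]. intros x [_ Hx]. apply Hclose, Hx.
Qed.

Lemma abs_RInt_le_of_bound (F h : R -> R) t : 0 <= t -> ex_RInt F 0 t -> ex_RInt h 0 t ->
  (forall tau, 0 < tau < t -> Rabs (F tau) <= h tau) -> Rabs (RInt F 0 t) <= RInt h 0 t.
Proof.
  intros Ht HF Hh Hbound. apply Rabs_le. split.
  - rewrite <- (RInt_opp (V := R_CompleteNormedModule)) by exact Hh.
    apply RInt_le; auto; [apply (ex_RInt_opp (V := R_NormedModule)), Hh|].
    intros x Hx. pose proof (proj1 (Rabs_le_between _ _) (Hbound x Hx)). cbn. lra.
  - apply RInt_le; auto. intros x Hx.
    pose proof (proj1 (Rabs_le_between _ _) (Hbound x Hx)). lra.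
Qed.

Lemma le_max_on_0t (g : R -> R) t B x : (forall tau, 0 <= tau <= t -> g tau <= B) ->
  0 <= x <= t -> g x <= max_on_0t g t.
Proof.
  intros Hbound Hx. unfold max_on_0t.
  set (E := fun y => exists tau, 0 <= tau <= t /\ y = g tau).
  destruct (Lub_Rbar_correct E) as [Hub Hleast].
  assert (Hgx : E (g x)) by (exists x; auto).
  destruct (Lub_Rbar E) as [r| |]; cbn in *.
  - exact (Hub _ Hgx).
  - exfalso. apply (Hleast (Finite B)). intros y [tau [Htau ->]]. apply Hbound, Htau.
  - exfalso. exact (Hub _ Hgx).
Qed.

(* Composing with the clamp extends a function continuous on [0, t] to one continuous on R. *)
Definition clamp (t x : R) : R := Rmax 0 (Rmin t x).

Lemma clamp_range t x : 0 <= t -> 0 <= clamp t x <= t.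
Proof. intros Ht. unfold clamp, Rmax, Rmin. repeat destruct Rle_dec; lra. Qed.

Lemma clamp_id t x : 0 <= x <= t -> clamp t x = x.
Proof. intros Hx. unfold clamp, Rmax, Rmin. repeat destruct Rle_dec; lra. Qed.

Lemma clamp_dist t x y : 0 <= t -> Rabs (clamp t x - clamp t y) <= Rabs (x - y).
Proof.
  intros Ht. unfold clamp, Rmax, Rmin.
  pose proof (Rle_abs (x - y)). pose proof (Rabs_maj2 (x - y)).
  repeat destruct Rle_dec; apply Rabs_le; lra.
Qed.

Definition duhamel {H : ModuleSpace R_Ring} (ip : H -> H -> R) (f : R -> H)
  (om : R) (w : H) (t : R) : R :=
  RInt (fun tau => sin (om * (t - tau)) * ip (f tau) w) 0 t.

Section ForcingIntegrals.

Context {H : ModuleSpace R_Ring} {ip : H -> H -> R} {T : R} {f : R -> H} {t : R}.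
Hypotheses (Hip : inner_product ip) (Hf : continuous_on_0T ip T f) (Ht : 0 <= t <= T).

Let clamped_forcing_continuous z eps : 0 < eps -> exists delta, 0 < delta /\
  forall x, Rabs (x - z) < delta -> l2norm ip (minus (f (clamp t x)) (f (clamp t z))) < eps.
Proof.
  intros Heps. pose proof (clamp_range t z ltac:(lra)).
  destruct (Hf (clamp t z) ltac:(lra) eps Heps) as [delta [Hdelta Hclose]].
  exists delta. split; [exact Hdelta|]. intros x Hx.
  pose proof (clamp_range t x ltac:(lra)).
  apply Hclose; [lra|]. eapply Rle_lt_trans; [apply clamp_dist; lra | exact Hx].
Qed.

Let continuous_clamped_ip w z : continuous (fun x => ip (f (clamp t x)) w) z.
Proof.
  apply continuous_of_eps_delta. intros eps Heps.
  pose proof (l2norm_nonneg w (ip := ip)).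
  destruct (clamped_forcing_continuous z (eps / (l2norm ip w + 1))) as [delta [Hdelta Hclose]].
  { apply Rdiv_lt_0_compat; lra. }
  exists delta. split; [exact Hdelta|]. intros x Hx.
  rewrite <- (ip_minus_l Hip). eapply Rle_lt_trans; [apply (cauchy_schwarz Hip)|].
  specialize (Hclose x Hx).
  pose proof (l2norm_nonneg (ip := ip) (minus (f (clamp t x)) (f (clamp t z)))).
  apply Rle_lt_trans with (eps / (l2norm ip w + 1) * l2norm ip w); [apply Rmult_le_compat_r; lra|].
  apply Rlt_le_trans with (eps / (l2norm ip w + 1) * (l2norm ip w + 1));
    [apply Rmult_lt_compat_l; [apply Rdiv_lt_0_compat|]; lra | right; field; lra].
Qed.

Let continuous_clamped_norm z : continuous (fun x => l2norm ip (f (clamp t x))) z.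
Proof.
  apply continuous_of_eps_delta. intros eps Heps.
  destruct (clamped_forcing_continuous z eps Heps) as [delta [Hdelta Hclose]].
  exists delta. split; [exact Hdelta|]. intros x Hx.
  eapply Rle_lt_trans; [apply (l2norm_reverse_triangle Hip) | exact (Hclose x Hx)].
Qed.

Let ex_RInt_of_clamped (k g : R -> R) : (forall z, continuous k z) ->
  (forall z, continuous (fun x => g (clamp t x)) z) -> ex_RInt (fun x => k x * g x) 0 t.
Proof.
  intros Hk Hg. apply (ex_RInt_ext (fun x => k x * g (clamp t x))).
  - intros x Hx. rewrite Rmin_left, Rmax_right in Hx by lra. rewrite clamp_id by lra. reflexivity.
  - apply (ex_RInt_continuous (V := R_CompleteNormedModule)). intros z _.
    apply (continuous_mult k), Hg. apply Hk.
Qed.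

Lemma ex_RInt_forcing_norm : ex_RInt (fun tau => l2norm ip (f tau)) 0 t.
Proof.
  apply (ex_RInt_ext (fun tau => 1 * l2norm ip (f tau))); [intros; apply Rmult_1_l|].
  apply ex_RInt_of_clamped; [intros; apply continuous_const | apply continuous_clamped_norm].
Qed.

Lemma ex_RInt_duhamel om w : ex_RInt (fun tau => sin (om * (t - tau)) * ip (f tau) w) 0 t.
Proof.
  apply ex_RInt_of_clamped; [|apply continuous_clamped_ip].
  intros z. apply (ex_derive_continuous (K := R_AbsRing) (V := R_NormedModule)). auto_derive. auto.
Qed.

Lemma duhamel_bound om w : l2norm ip w = 1 ->
  Rabs (duhamel ip f om w t) <= RInt (fun tau => l2norm ip (f tau)) 0 t.
Proof.
  intros Hw. apply abs_RInt_le_of_bound;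
    [lra | apply ex_RInt_duhamel | apply ex_RInt_forcing_norm |].
  intros tau _. apply (ip_mul_bound Hip); [exact Hw | apply Rabs_sin_le_1].
Qed.

Lemma duhamel_diff_bound om omh w wh : l2norm ip w = 1 ->
  Rabs (duhamel ip f omh wh t - duhamel ip f om w t)
  <= (l2norm ip (minus wh w)
      + max_on_0t (fun tau => Rabs (sin (omh * tau) - sin (om * tau))) t)
     * RInt (fun tau => l2norm ip (f tau)) 0 t.
Proof.
  intros Hw.
  set (M := max_on_0t (fun tau => Rabs (sin (omh * tau) - sin (om * tau))) t).
  set (c := l2norm ip (minus wh w) + M).
  assert (Hdiff : duhamel ip f omh wh t - duhamel ip f om w t
    = RInt (fun tau => sin (omh * (t - tau)) * ip (f tau) wh
                       - sin (om * (t - tau)) * ip (f tau) w) 0 t)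
    by (symmetry; exact (RInt_minus (V := R_CompleteNormedModule) _ _ 0 t
                          (ex_RInt_duhamel omh wh) (ex_RInt_duhamel om w))).
  assert (Hscal : RInt (fun tau => c * l2norm ip (f tau)) 0 t
                  = c * RInt (fun tau => l2norm ip (f tau)) 0 t)
    by exact (RInt_scal (V := R_CompleteNormedModule) _ 0 t c ex_RInt_forcing_norm).
  rewrite Hdiff, <- Hscal.
  apply abs_RInt_le_of_bound; [lra | | |].
  - exact (ex_RInt_minus (V := R_NormedModule) _ _ 0 t
             (ex_RInt_duhamel omh wh) (ex_RInt_duhamel om w)).
  - exact (ex_RInt_scal (V := R_NormedModule) _ 0 t c ex_RInt_forcing_norm).
  - intros tau Htau.
    assert (HM : Rabs (sin (omh * (t - tau)) - sin (om * (t - tau))) <= M).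
    { apply (le_max_on_0t (fun s => Rabs (sin (omh * s) - sin (om * s))) t 2 (t - tau));
        [|lra]. intros s _.
      eapply Rle_trans; [apply Rabs_triang|]. rewrite Rabs_Ropp.
      pose proof (Rabs_sin_le_1 (omh * s)). pose proof (Rabs_sin_le_1 (om * s)). lra. }
    eapply Rle_trans; [apply (ip_mul_diff_bound Hip); [exact Hw | apply Rabs_sin_le_1]|].
    pose proof (l2norm_nonneg (ip := ip) (f tau)). unfold c. nra.
Qed.

End ForcingIntegrals.

Section ModalCoefficient.

Context {H : ModuleSpace R_Ring} {ip : H -> H -> R} {T : R} {f : R -> H} {t : R} {u0 v0 : H}.
Hypotheses (Hip : inner_product ip) (Hf : continuous_on_0T ip T f) (Ht : 0 <= t <= T).

Lemma dcoef_duhamel lam w : dcoef ip lam w u0 v0 f t =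
  ip u0 w * cos (sqrt lam * t) + sin (sqrt lam * t) * ip v0 w / sqrt lam
  + duhamel ip f (sqrt lam) w t / sqrt lam.
Proof. unfold dcoef, duhamel, Rdiv. ring. Qed.

Lemma dcoef_bound lam w : 0 < lam -> l2norm ip w = 1 ->
  Rabs (dcoef ip lam w u0 v0 f t)
  <= l2norm ip u0 + l2norm ip v0 / sqrt lam
     + RInt (fun tau => l2norm ip (f tau)) 0 t / sqrt lam.
Proof.
  intros Hlam Hw. pose proof (sqrt_lt_R0 _ Hlam) as Hom.
  rewrite dcoef_duhamel.
  eapply Rle_trans; [apply Rabs_triang|]. apply Rplus_le_compat.
  - eapply Rle_trans; [apply Rabs_triang|]. apply Rplus_le_compat.
    + rewrite Rmult_comm. apply (ip_mul_bound Hip); [exact Hw | apply Rabs_cos_le_1].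
    + rewrite Rabs_div, (Rabs_pos_eq (sqrt lam)) by lra.
      apply Rmult_le_compat_r; [left; apply Rinv_0_lt_compat, Hom|].
      apply (ip_mul_bound Hip); [exact Hw | apply Rabs_sin_le_1].
  - rewrite Rabs_div, (Rabs_pos_eq (sqrt lam)) by lra.
    apply Rmult_le_compat_r; [left; apply Rinv_0_lt_compat, Hom|].
    exact (duhamel_bound Hip Hf Ht _ _ Hw).
Qed.

Lemma dcoef_diff_bound lam lamh w wh : 0 < lam <= lamh -> l2norm ip w = 1 ->
  let om := sqrt lam in
  let omh := sqrt lamh in
  let dist := l2norm ip (minus wh w) in
  Rabs (dcoef ip lamh wh u0 v0 f t - dcoef ip lam w u0 v0 f t)
  <= l2norm ip u0 * (dist + Rabs (cos (omh * t) - cos (om * t)))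
   + l2norm ip v0 / om * ((omh - om) / om + dist + Rabs (sin (omh * t) - sin (om * t)))
   + RInt (fun tau => l2norm ip (f tau)) 0 t / om
     * ((omh - om) / om + dist
        + max_on_0t (fun tau => Rabs (sin (omh * tau) - sin (om * tau))) t).
Proof.
  intros Hlam Hw om omh dist.
  assert (Hom : 0 < om <= omh)
    by (split; [apply sqrt_lt_R0 | apply sqrt_le_1_alt]; lra).
  set (Nf := RInt (fun tau => l2norm ip (f tau)) 0 t).
  set (M := max_on_0t (fun tau => Rabs (sin (omh * tau) - sin (om * tau))) t).
  assert (Hinitial : Rabs (ip u0 wh * cos (omh * t) - ip u0 w * cos (om * t))
                     <= l2norm ip u0 * (dist + Rabs (cos (omh * t) - cos (om * t)))).
  { rewrite (Rmult_comm (ip u0 wh)), (Rmult_comm (ip u0 w)).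
    apply (ip_mul_diff_bound Hip); [exact Hw | apply Rabs_cos_le_1]. }
  assert (Hvelocity : Rabs (sin (omh * t) * ip v0 wh / omh - sin (om * t) * ip v0 w / om)
    <= (l2norm ip v0 * (dist + Rabs (sin (omh * t) - sin (om * t)))
        + l2norm ip v0 * ((omh - om) / om)) / om).
  { apply div_diff_bound; [exact Hom | |].
    - apply (ip_mul_diff_bound Hip); [exact Hw | apply Rabs_sin_le_1].
    - apply (ip_mul_bound Hip); [exact Hw | apply Rabs_sin_le_1]. }
  assert (Hforcing : Rabs (duhamel ip f omh wh t / omh - duhamel ip f om w t / om)
    <= ((dist + M) * Nf + Nf * ((omh - om) / om)) / om).
  { apply div_diff_bound; [exact Hom | |].
    - exact (duhamel_diff_bound Hip Hf Ht _ _ _ _ Hw).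
    - exact (duhamel_bound Hip Hf Ht _ _ Hw). }
  rewrite !dcoef_duhamel. fold om omh.
  match goal with |- Rabs (?a1 + ?b1 + ?c1 - (?a0 + ?b0 + ?c0)) <= _ =>
    replace (a1 + b1 + c1 - (a0 + b0 + c0)) with ((a1 - a0) + (b1 - b0) + (c1 - c0)) by ring end.
  eapply Rle_trans; [apply Rabs_triang|].
  eapply Rle_trans; [apply Rplus_le_compat_r, Rabs_triang|].
  apply Rle_trans with
    (l2norm ip u0 * (dist + Rabs (cos (omh * t) - cos (om * t)))
     + (l2norm ip v0 * (dist + Rabs (sin (omh * t) - sin (om * t)))
        + l2norm ip v0 * ((omh - om) / om)) / om
     + ((dist + M) * Nf + Nf * ((omh - om) / om)) / om); [lra|].
  right. field. lra.
Qed.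

End ModalCoefficient.

Lemma l2norm_of_ip_one {H : ModuleSpace R_Ring} (ip : H -> H -> R) x :
  ip x x = 1 -> l2norm ip x = 1.
Proof. intros E. unfold l2norm. rewrite E. apply sqrt_1. Qed.

Theorem theorem4p3
  (H : ModuleSpace R_Ring) (ip : H -> H -> R) (V Vh : H -> Prop) (a : H -> H -> R)
  (n : nat) (lam lamh : nat -> R) (u uh : nat -> H)
  (T : R) (u0 v0 : H) (f : R -> H)
  (Hip : inner_product ip)
  (HV : subspace V) (Ha : energy_form V a)
  (HVh : subspace_of_dim Vh n) (HVhV : forall v, Vh v -> V v)
  (Hex : exact_eigenpairs ip V a lam u)
  (Hdisc : discrete_eigenpairs ip Vh n a lamh uh)
  (HT : 0 < T) (Hf : continuous_on_0T ip T f) :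
  forall (j : nat) (t : R), (1 <= j <= n)%nat -> 0 <= t <= T ->
    let om := sqrt (lam j) in
    let omh := sqrt (lamh j) in
    let e := minus (scal (dcoef ip (lamh j) (uh j) u0 v0 f t) (uh j))
                   (scal (dcoef ip (lam j) (u j) u0 v0 f t) (u j)) in
    l2norm ip e <=
      l2norm ip u0 * (2 * l2norm ip (minus (uh j) (u j))
                      + Rabs (cos (omh * t) - cos (om * t)))
    + l2norm ip v0 / om * ((omh - om) / om + 2 * l2norm ip (minus (uh j) (u j))
                      + Rabs (sin (omh * t) - sin (om * t)))
    + / om * RInt (fun tau => l2norm ip (f tau)) 0 t
        * ((omh - om) / om + 2 * l2norm ip (minus (uh j) (u j))
           + max_on_0t (fun tau => Rabs (sin (omh * tau) - sin (om * tau))) t).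
Proof.
  intros j t Hj Ht om omh e.
  assert (Hlam : 0 < lam j <= lamh j).
  { pose proof Hex as [_ [Hlam1 [Hmono _]]]. split.
    - eapply Rlt_le_trans; [exact Hlam1|].
      apply (le_of_le_succ_on lam 1 j); [intros i Hi; apply Hmono | |]; lia.
    - exact (exact_eigenvalue_le_discrete Hip HV Ha (proj1 HVh) HVhV Hdisc lam u j Hex Hj). }
  assert (Hu : l2norm ip (u j) = 1).
  { apply l2norm_of_ip_one. destruct Hex as [_ [_ [_ [Horth _]]]].
    rewrite Horth, Nat.eqb_refl by lia. reflexivity. }
  assert (Huh : l2norm ip (uh j) = 1).
  { apply l2norm_of_ip_one. destruct Hdisc as [_ [_ [_ Horth]]].
    rewrite Horth, Nat.eqb_refl by lia. reflexivity. }
  assert (Hom : 0 < om) by (apply sqrt_lt_R0; lra).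
  pose proof (l2norm_scal_diff_le Hip (u j) (uh j)
                (dcoef ip (lam j) (u j) u0 v0 f t) (dcoef ip (lamh j) (uh j) u0 v0 f t) Huh)
    as Hsplit.
  pose proof (dcoef_diff_bound (u0 := u0) (v0 := v0) Hip Hf Ht
                (lam j) (lamh j) (u j) (uh j) Hlam Hu) as Hdiff.
  pose proof (dcoef_bound (u0 := u0) (v0 := v0) Hip Hf Ht (lam j) (u j) (proj1 Hlam) Hu) as Hd.
  pose proof (l2norm_nonneg (ip := ip) (minus (uh j) (u j))) as Hdist.
  cbv zeta in Hdiff. fold om omh e in Hsplit, Hdiff, Hd.
  eapply Rle_trans; [exact Hsplit|].
  eapply Rle_trans;
    [apply Rplus_le_compat; [exact Hdiff | apply Rmult_le_compat_r; [exact Hdist | exact Hd]]|].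
  right. field. lra.
Qed.
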